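(* Let $m\le n$ and let $r_1,\dots,r_m$ be positive integers with $n=\sum_{i=1}^m r_i$. For a positive integer $r$, let $\mathbf{1}_r$ denote the column vector of length $r$ with all entries $1$. Let $A=(a_{ij})$ be an $m\times m$ real matrix, and let $M$ be an $n\times n$ real matrix whose rows are divided into consecutive blocks of sizes $r_1,\dots,r_m$, whose $j$-th column, for $1\le j\le m$, is the vector $(a_{1j}\mathbf{1}_{r_1}^\top, a_{2j}\mathbf{1}_{r_2}^\top,\dots,a_{mj}\mathbf{1}_{r_m}^\top)^\top$, and whose remaining $n-m$ columns are arbitrary. Let $N$ be the $n\times n$ matrix with the same last $n-m$ columns as $M$, and whose $j$-th column, for $1\le j\le m$, has $\mathbf{1}_{r_j}$ in the $j$-th row block and zeros in all other row blocks. Then $\det(M)=\det(A)\cdot\det(N)$. *)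

From mathcomp Require Import all_boot all_order all_algebra.
Set Implicit Arguments. Unset Strict Implicit. Unset Printing Implicit Defensive.
Import Order.TTheory GRing.Theory Num.Theory.

(* Row blocks: rows are numbered 0..n-1; block i (0-based) consists of rows k
   with  r_0 + ... + r_(i-1) <= k < r_0 + ... + r_i. *)
Definition in_block (m : nat) (r : 'I_m -> nat) (i : 'I_m) (k : nat) : bool :=
  (\sum_(l < m | (l < i)%N) r l <= k)%N && (k < \sum_(l < m | (l <= i)%N) r l)%N.

From mathcomp Require Import all_boot all_order all_algebra.
Set Implicit Arguments.
Unset Strict Implicit.
Unset Printing Implicit Defensive.
Import Order.TTheory GRing.Theory Num.Theory.
Local Open Scope ring_scope.

(* The first m columns of M are those of A, each entry repeated down its row
   block, i.e. they form the product P A where P is the n x m block indicator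
   matrix; P is also the left part of N.  Hence M = N * diag(A, 1), and the
   determinant of the block-triangular factor is det A. *)

Lemma ex_step_crossing (f : nat -> nat) (k n : nat) :
  (f 0 <= k < f n)%N -> exists2 j, (j < n)%N & (f j <= k < f j.+1)%N.
Proof.
elim: n => [|n IHn] /andP[f0k ltk]; first by rewrite ltnNge f0k in ltk.
have [ltkn | lenk] := ltnP k (f n); last by exists n; rewrite ?lenk.
case: IHn => [|j ltjn jk]; first by rewrite f0k.
by exists j => //; apply: ltnW.
Qed.

Section RowBlocks.

Variables (m : nat) (r : 'I_m -> nat).

Definition block_start (j : nat) : nat := (\sum_(l < m | (l < j)%N) r l)%N.

Lemma in_blockE (i : 'I_m) (k : nat) :
  in_block r i k = (block_start i <= k < block_start i.+1)%N.
Proof. by congr (_ && (_ < _)%N); apply: eq_bigl => l; rewrite ltnS. Qed.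

Lemma block_start_homo : {homo block_start : j j' / (j <= j')%N}.
Proof.
move=> j j' lejj'; apply: (sub_le_big leqnn (fun a b => leq_addr b a)) => l ltlj.
exact: leq_trans ltlj lejj'.
Qed.

Lemma in_block_inj (i j : 'I_m) (k : nat) :
  in_block r i k -> in_block r j k -> i = j.
Proof.
have notin_later (a b : 'I_m) : (a < b)%N -> in_block r a k -> ~~ in_block r b k.
  move=> ltab; rewrite !in_blockE => /andP[_ ltk].
  by rewrite negb_and -ltnNge (leq_trans ltk (block_start_homo ltab)).
move=> ik jk; apply: val_inj; have [ltij | ltji | //] := ltngtP i j.
- by have := notin_later _ _ ltij ik; rewrite jk.
- by have := notin_later _ _ ltji jk; rewrite ik.
Qed.

Lemma exists_in_block (k : nat) :
  (k < \sum_(l < m) r l)%N -> exists i : 'I_m, in_block r i k.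
Proof.
move=> ltk; have [|j ltjm] := @ex_step_crossing block_start k m.
  by rewrite /block_start big_pred0 //= (eq_bigl xpredT) // => l; rewrite ltn_ord.
by exists (Ordinal ltjm); rewrite in_blockE.
Qed.

Definition block_indicator (R : pzSemiRingType) (n : nat) : 'M[R]_(n, m) :=
  \matrix_(k, j) (if in_block r j k then 1 else 0).

Lemma block_indicator_mulmx (R : pzSemiRingType) (n p : nat) (A : 'M[R]_(m, p))
    (k : 'I_n) (i : 'I_m) (c : 'I_p) :
  in_block r i k -> (block_indicator R n *m A) k c = A i c.
Proof.
move=> ik; rewrite !mxE (bigD1 i) //= mxE ik mul1r big1 ?addr0 // => j neji.
rewrite mxE; case: ifP => [jk|_]; last by rewrite mul0r.
by rewrite (in_block_inj jk ik) eqxx in neji.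
Qed.

End RowBlocks.

Lemma det_row_mx_mulmx (R : comPzRingType) (m n : nat)
    (P : 'M[R]_(m + n, m)) (B : 'M[R]_(m + n, n)) (A : 'M[R]_m) :
  \det (row_mx (P *m A) B) = \det A * \det (row_mx P B).
Proof.
have -> : row_mx (P *m A) B = row_mx P B *m block_mx A 0 0 1%:M.
  by rewrite mul_row_block !mulmx0 addr0 add0r mulmx1.
by rewrite det_mulmx det_ublock det1 mulr1 mulrC.
Qed.

Theorem lemma4p5 (R : realFieldType) (m n : nat) (r : 'I_m -> nat)
  (hmn : (m <= n)%N) (hr : forall i, (0 < r i)%N) (hn : n = (\sum_(i < m) r i)%N)
  (A : 'M[R]_m) (M N : 'M[R]_n)
  (hM : forall (k c : 'I_n) (hc : (c < m)%N) (i : 'I_m),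
          in_block r i k -> M k c = A i (Ordinal hc))
  (hN1 : forall (k c : 'I_n) (hc : (c < m)%N),
          N k c = if in_block r (Ordinal hc) k then 1 else 0)
  (hN2 : forall (k c : 'I_n), (m <= c)%N -> N k c = M k c) :
  \det M = \det A * \det N.
Proof.
have blockP (k : 'I_n) : exists i : 'I_m, in_block r i k.
  by apply: exists_in_block; rewrite -hn.
clear hn; move: (n - m)%N (subnKC hmn) => n' def_n; subst n.
have ord_lshift (j : 'I_m) (hj : (lshift n' j < m)%N) : Ordinal hj = j.
  exact: val_inj.
have lN : lsubmx N = block_indicator r R (m + n').
  apply/matrixP => k j.
  by rewrite !mxE (hN1 k (lshift n' j) (ltn_ord j)) ord_lshift.
have lM : lsubmx M = block_indicator r R (m + n') *m A.
  apply/matrixP => k c; have [i ik] := blockP k.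
  rewrite mxE (hM k (lshift n' c) (ltn_ord c) i ik) ord_lshift.
  by rewrite (block_indicator_mulmx _ _ ik).
have rN : rsubmx N = rsubmx M.
  by apply/matrixP => k c; rewrite !mxE hN2 //= leq_addr.
by rewrite -[M]hsubmxK -[N]hsubmxK lM lN rN det_row_mx_mulmx.
Qed.
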